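(* Let $\Omega=\{(u,v)\in\mathbb R^2: 0<u<2^{1/3},\ v>0\}$ and let $I\ni t\mapsto(u(t),v(t))\in\Omega$ be the maximal solution of $$u'=\frac23\,\frac{2-u^3}{u^3v^3},\qquad v'=-\frac23\,\frac{1-2u^3}{u^4v^2},\qquad u(0)=v(0)=1.$$ Then this solution parametrizes the whole curve $v=1/\sqrt{u(2-u^3)}$, $0<u<2^{1/3}$; its existence interval is $I=(t_{min},+\infty)$ with $$t_{min}=-\frac32\int_0^1\frac{x^{3/2}}{(2-x^3)^{5/2}}\,dx,$$ and $\lim_{t\to t_{min}}u(t)=0$, $\lim_{t\to t_{min}}v(t)=+\infty$, $\lim_{t\to+\infty}u(t)=2^{1/3}$, $\lim_{t\to+\infty}v(t)=+\infty$. *)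

From Stdlib Require Import Reals Lra.
From Coquelicot Require Import Coquelicot.
Open Scope R_scope.

Definition in_I (a b : Rbar) (t : R) : Prop := Rbar_lt a t /\ Rbar_lt t b.

Definition cbrt2 : R := Rpower 2 (1/3).

Definition F1 (u v : R) : R := 2/3 * ((2 - u^3) / (u^3 * v^3)).
Definition F2 (u v : R) : R := - (2/3) * ((1 - 2 * u^3) / (u^4 * v^2)).

Definition is_sol (a b : Rbar) (u v : R -> R) : Prop :=
  Rbar_lt a (Finite 0) /\ Rbar_lt (Finite 0) b /\ u 0 = 1 /\ v 0 = 1 /\
  forall t, in_I a b t ->
    (0 < u t < cbrt2 /\ 0 < v t) /\
    is_derive u t (F1 (u t) (v t)) /\ is_derive v t (F2 (u t) (v t)).

Definition is_max_sol (a b : Rbar) (u v : R -> R) : Prop :=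
  is_sol a b u v /\
  forall a' b' u' v', is_sol a' b' u' v' ->
    Rbar_le a' a -> Rbar_le b b' ->
    (forall t, in_I a b t -> u' t = u t /\ v' t = v t) ->
    a' = a /\ b' = b.

(* t_min = -3/2 * int_0^1 x^(3/2) / (2 - x^3)^(5/2) dx,
   with x^(3/2) = x sqrt x and (2-x^3)^(5/2) = (2-x^3)^2 sqrt(2-x^3) *)
Definition tmin : R :=
  - (3/2) * RInt (fun x => x * sqrt x / ((2 - x^3)^2 * sqrt (2 - x^3))) 0 1.

From Stdlib Require Import Reals Lra Psatz Ranalysis5 ClassicalEpsilon.
From Coquelicot Require Import Coquelicot.
Open Scope R_scope.

(* Along any solution, [v^2 u (2 - u^3)] is a first integral equal to 1 at [t = 0],
   so [v = 1 / sqrt (u (2 - u^3))]. Substituting this into the first equation gives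
   [u' = 1 / (3/2 k(u))], where [k] is the integrand in the definition of [t_min]; hence
   [t = H(u(t))] with [H(w) = 3/2 \int_1^w k]. The function [H] is increasing on
   [[0, 2^(1/3))], with [H(0) = t_min], [H(1) = 0], and [H(w) -> +oo] as [w -> 2^(1/3)]
   because [k] dominates the derivative of a multiple of [(2 - w^3)^(-3/2)]. So every
   solution is a restriction of [(H^-1, curve o H^-1)] on [(t_min, +oo)], which is itself
   a solution; the limits follow from the monotonicity of [H^-1]. *)

Lemma pow3_lt x y : x < y -> x ^ 3 < y ^ 3.
Proof.
  intros Hxy.
  assert (0 < x ^ 2 + x * y + y ^ 2) by (destruct (Rle_dec 0 (x * y)); nra).
  replace (y ^ 3 - x ^ 3) with ((y - x) * (x ^ 2 + x * y + y ^ 2)) by ring; nra.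
Qed.

Lemma Rpower_third_pow3 y : 0 < y -> Rpower y (1/3) ^ 3 = y.
Proof.
  intros Hy.
  rewrite <- Rpower_pow by (unfold Rpower; apply exp_pos).
  rewrite Rpower_mult; replace (1/3 * INR 3) with 1 by (simpl; field).
  now apply Rpower_1.
Qed.

Lemma cbrt2_pos : 0 < cbrt2.
Proof. unfold cbrt2, Rpower; apply exp_pos. Qed.

Lemma lt_cbrt2 x : x < cbrt2 <-> x ^ 3 < 2.
Proof.
  rewrite <- (Rpower_third_pow3 2) by lra; fold cbrt2.
  split; [apply pow3_lt|].
  intros Hx; destruct (Rlt_le_dec x cbrt2) as [|Hc]; [easy|].
  assert (cbrt2 ^ 3 <= x ^ 3) by (apply pow_incr; pose proof cbrt2_pos; lra); lra.
Qed.

Lemma cbrt2_gt1 : 1 < cbrt2.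
Proof. apply lt_cbrt2; lra. Qed.

Lemma cube_root_below_cbrt2 d : 0 < d < 2 -> exists w, 0 < w < cbrt2 /\ w ^ 3 = 2 - d.
Proof.
  intros Hd; exists (Rpower (2 - d) (1/3)).
  rewrite Rpower_third_pow3 by lra.
  split; [|easy]; split; [unfold Rpower; apply exp_pos|].
  apply lt_cbrt2; rewrite Rpower_third_pow3; lra.
Qed.

Lemma MVT_interior (f df : R -> R) x y : x < y ->
  (forall z, x <= z <= y -> is_derive f z (df z)) ->
  exists z, x < z < y /\ f y - f x = df z * (y - x).
Proof.
  intros Hxy Hd.
  destruct (MVT_cor2 f df x y Hxy) as [z [Ez Hz]].
  - intros z Hz; apply is_derive_Reals, Hd, Hz.
  - now exists z.
Qed.

Lemma is_derive_pos_incr (f df : R -> R) x y : x < y ->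
  (forall z, x <= z <= y -> is_derive f z (df z)) ->
  (forall z, x < z < y -> 0 < df z) -> f x < f y.
Proof.
  intros Hxy Hd Hpos.
  destruct (MVT_interior f df x y Hxy Hd) as [z [Hz Ez]].
  specialize (Hpos z Hz); nra.
Qed.

Definition tmin_integrand (x : R) : R :=
  x * sqrt x / ((2 - x ^ 3) ^ 2 * sqrt (2 - x ^ 3)).

Lemma tmin_integrand_continuous x : x < cbrt2 -> continuous tmin_integrand x.
Proof.
  intros Hx; apply lt_cbrt2 in Hx.
  assert (Hsqrt : forall y, continuity_pt sqrt y)
    by (intros y; apply continuity_pt_filterlim, continuous_sqrt).
  apply continuity_pt_filterlim.
  assert (0 < sqrt (2 - x ^ 3)) by (apply sqrt_lt_R0; lra).
  assert (0 < (2 - x ^ 3) ^ 2) by (apply pow_lt; lra).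
  apply continuity_pt_div.
  - apply continuity_pt_mult; [apply continuity_pt_id | apply Hsqrt].
  - apply continuity_pt_mult; [reg|].
    apply (continuity_pt_comp (fun x => 2 - x ^ 3) sqrt); [reg | apply Hsqrt].
  - nra.
Qed.

Lemma tmin_integrand_pos x : 0 < x < cbrt2 -> 0 < tmin_integrand x.
Proof.
  intros [Hx Hxc]; apply lt_cbrt2 in Hxc.
  assert (0 < sqrt x) by (apply sqrt_lt_R0; lra).
  assert (0 < sqrt (2 - x ^ 3)) by (apply sqrt_lt_R0; lra).
  assert (0 < (2 - x ^ 3) ^ 2) by (apply pow_lt; lra).
  apply Rdiv_lt_0_compat; nra.
Qed.

Lemma ex_RInt_tmin_integrand a b :
  a < cbrt2 -> b < cbrt2 -> ex_RInt tmin_integrand a b.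
Proof.
  intros Ha Hb; apply (@ex_RInt_continuous R_CompleteNormedModule).
  intros z [_ Hz]; apply tmin_integrand_continuous.
  unfold Rmax in Hz; destruct (Rle_dec a b); lra.
Qed.

Definition hitting_time (w : R) : R := 3/2 * RInt tmin_integrand 1 w.

Lemma is_derive_hitting_time w : w < cbrt2 ->
  is_derive hitting_time w (3/2 * tmin_integrand w).
Proof.
  intros Hw; apply is_derive_scal, (is_derive_RInt _ _ 1).
  - apply (filter_imp (fun b => b < cbrt2)); [|now apply open_lt].
    intros b Hb; apply (@RInt_correct R_CompleteNormedModule).
    apply ex_RInt_tmin_integrand; [pose proof cbrt2_gt1; lra | easy].
  - now apply tmin_integrand_continuous.
Qed.

Lemma continuous_hitting_time w : w < cbrt2 -> continuity_pt hitting_time w.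
Proof.
  intros Hw; apply continuity_pt_filterlim, (@ex_derive_continuous R_AbsRing R_NormedModule).
  eexists; now apply is_derive_hitting_time.
Qed.

Lemma hitting_time_lt x y : 0 <= x -> x < y -> y < cbrt2 ->
  hitting_time x < hitting_time y.
Proof.
  intros Hx Hxy Hy.
  apply (is_derive_pos_incr _ (fun z => 3/2 * tmin_integrand z) x y Hxy).
  - intros z Hz; apply is_derive_hitting_time; lra.
  - intros z Hz; assert (0 < tmin_integrand z) by (apply tmin_integrand_pos; lra); lra.
Qed.

Lemma hitting_time_lt_iff x y : 0 <= x < cbrt2 -> 0 <= y < cbrt2 ->
  hitting_time x < hitting_time y <-> x < y.
Proof.
  intros Hx Hy; split; [|intros; apply hitting_time_lt; lra].
  intros Hlt; destruct (Rlt_le_dec x y) as [|[Hyx|Hyx]]; [easy| |subst; lra].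
  assert (hitting_time y < hitting_time x) by (apply hitting_time_lt; lra); lra.
Qed.

Lemma hitting_time_1 : hitting_time 1 = 0.
Proof. unfold hitting_time; rewrite RInt_point; unfold zero; simpl; ring. Qed.

Lemma hitting_time_0 : hitting_time 0 = tmin.
Proof.
  unfold hitting_time, tmin; fold tmin_integrand.
  rewrite <- opp_RInt_swap.
  - change (opp (RInt tmin_integrand 0 1)) with (- RInt tmin_integrand 0 1); ring.
  - apply ex_RInt_tmin_integrand; pose proof cbrt2_gt1; lra.
Qed.

Lemma tmin_neg : tmin < 0.
Proof.
  pose proof cbrt2_gt1.
  assert (Hlt : hitting_time 0 < hitting_time 1) by (apply hitting_time_lt; lra).
  now rewrite hitting_time_0, hitting_time_1 in Hlt.
Qed.

(* On [[1, cbrt2)], [3/2 * tmin_integrand] dominates the derivative of [(2 - x^3)^(-3/2) / 6]. *)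
Lemma hitting_time_lower_bound w : 1 <= w < cbrt2 ->
  (/ ((2 - w ^ 3) * sqrt (2 - w ^ 3)) - 1) / 6 <= hitting_time w.
Proof.
  intros [[Hw1|<-] Hwc]; cycle 1.
  { rewrite hitting_time_1; replace (2 - 1 ^ 3) with 1 by ring.
    rewrite sqrt_1; lra. }
  set (f x := hitting_time x - / ((2 - x ^ 3) * sqrt (2 - x ^ 3)) / 6).
  set (df x := (3/2 * x * sqrt x - 3/4 * x ^ 2) / ((2 - x ^ 3) ^ 2 * sqrt (2 - x ^ 3))).
  destruct (MVT_interior f df 1 w Hw1) as [z [Hz Ez]].
  - intros z Hz.
    assert (Hz3 : z ^ 3 < 2) by (apply lt_cbrt2; lra).
    assert (Hr : 0 < sqrt (2 - z ^ 3)) by (apply sqrt_lt_R0; lra).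
    assert (Hrr : sqrt (2 - z ^ 3) * sqrt (2 - z ^ 3) = 2 - z ^ 3)
      by (apply sqrt_sqrt; lra).
    replace (df z) with
      (3/2 * tmin_integrand z - 9/2 * z ^ 2 / ((2 - z ^ 3) ^ 2 * sqrt (2 - z ^ 3)) / 6).
    + apply (is_derive_minus hitting_time (fun x => / ((2 - x ^ 3) * sqrt (2 - x ^ 3)) / 6));
        [apply is_derive_hitting_time; lra|].
      auto_derive.
      * replace (2 + - (z * (z * (z * 1)))) with (2 - z ^ 3) by ring; nra.
      * replace (2 + - (z * (z * (z * 1)))) with (2 - z ^ 3) by ring.
        set (r := sqrt (2 - z ^ 3)) in *; clearbody r; rewrite <- Hrr; field; lra.
    + unfold df, tmin_integrand; field; nra.
  - assert (Hz3 : z ^ 3 < 2) by (apply lt_cbrt2; lra).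
    assert (Hr : 0 < sqrt (2 - z ^ 3)) by (apply sqrt_lt_R0; lra).
    assert (Hs : 1 <= sqrt z) by (rewrite <- sqrt_1; apply sqrt_le_1_alt; lra).
    assert (Hz2 : z ^ 2 < 2 * z) by (assert (z < 2) by (pose proof (pow3_lt 2 z); nra); nra).
    assert (0 <= df z).
    { apply Rdiv_le_0_compat; [nra|].
      assert (0 < (2 - z ^ 3) ^ 2) by (apply pow_lt; lra); nra. }
    assert (Hf1 : f 1 = - / 6).
    { unfold f; rewrite hitting_time_1; replace (2 - 1 ^ 3) with 1 by ring.
      rewrite sqrt_1; field. }
    unfold f in Ez, Hf1; nra.
Qed.

Lemma hitting_time_unbounded M : exists w, 0 < w < cbrt2 /\ M < hitting_time w.
Proof.
  set (d := / (6 * Rabs M + 4)).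
  assert (HM := Rabs_pos M); assert (HMM := RRle_abs M).
  assert (Hd : 0 < d <= 1/4).
  { unfold d; split; [apply Rinv_0_lt_compat; lra|].
    apply Rmult_le_reg_r with (6 * Rabs M + 4); [lra|].
    rewrite Rinv_l; lra. }
  destruct (cube_root_below_cbrt2 d) as [w [Hw Hw3]]; [lra|].
  assert (Hw1 : 1 <= w)
    by (destruct (Rlt_le_dec w 1) as [Hlt|]; [apply pow3_lt in Hlt; lra | easy]).
  exists w; split; [easy|].
  assert (Hlb := hitting_time_lower_bound w (conj Hw1 (proj2 Hw))).
  rewrite Hw3 in Hlb; replace (2 - (2 - d)) with d in Hlb by ring.
  assert (Hs : 0 < sqrt d <= 1)
    by (split; [apply sqrt_lt_R0 | rewrite <- sqrt_1; apply sqrt_le_1_alt]; lra).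
  assert (/ d <= / (d * sqrt d))
    by (apply Rinv_le_contravar; nra).
  assert (/ d = 6 * Rabs M + 4) by (unfold d; rewrite Rinv_inv; easy).
  lra.
Qed.

Lemma hitting_time_surj t : tmin < t ->
  exists w, 0 < w < cbrt2 /\ hitting_time w = t.
Proof.
  intros Ht; destruct (hitting_time_unbounded t) as [w1 [Hw1 Ht1]].
  destruct (IVT_interv (fun x => hitting_time x - t) 0 w1) as [w [Hw Ew]];
    [| lra | rewrite hitting_time_0; lra | lra |].
  - intros x Hx; apply continuity_pt_minus;
      [apply continuous_hitting_time; lra | apply continuity_pt_const; now intros ? ?].
  - exists w; split; [|lra].
    destruct (Req_dec w 0) as [->|]; [rewrite hitting_time_0 in Ew|]; lra.
Qed.

(* The inverse of [hitting_time] on [(tmin, +oo)]; its values for [t <= tmin] are junk. *)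
Definition u_sol (t : R) : R :=
  epsilon (inhabits 0) (fun w => 0 < w < cbrt2 /\ hitting_time w = t).

Lemma u_sol_spec t : tmin < t -> 0 < u_sol t < cbrt2 /\ hitting_time (u_sol t) = t.
Proof. intros Ht; unfold u_sol; apply epsilon_spec, hitting_time_surj, Ht. Qed.

Lemma u_sol_hitting_time w : 0 < w < cbrt2 -> u_sol (hitting_time w) = w.
Proof.
  intros Hw.
  assert (Ht : tmin < hitting_time w)
    by (rewrite <- hitting_time_0; apply hitting_time_lt; lra).
  destruct (u_sol_spec _ Ht) as [Hu Eu].
  destruct (Rtotal_order (u_sol (hitting_time w)) w) as [Hlt|[|Hlt]]; [|easy|];
    apply hitting_time_lt_iff in Hlt; lra.
Qed.

Lemma lt_u_sol_iff w t : 0 <= w < cbrt2 -> tmin < t ->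
  w < u_sol t <-> hitting_time w < t.
Proof.
  intros Hw Ht; destruct (u_sol_spec t Ht) as [Hu Eu].
  rewrite <- Eu at 2; symmetry; apply hitting_time_lt_iff; lra.
Qed.

Lemma u_sol_lt_iff w t : 0 <= w < cbrt2 -> tmin < t ->
  u_sol t < w <-> t < hitting_time w.
Proof.
  intros Hw Ht; destruct (u_sol_spec t Ht) as [Hu Eu].
  rewrite <- Eu at 2; symmetry; apply hitting_time_lt_iff; lra.
Qed.

Lemma continuous_u_sol t : tmin < t -> continuity_pt u_sol t.
Proof.
  intros Ht; destruct (u_sol_spec t Ht) as [Hu _].
  set (lb := u_sol t / 2); set (ub := (u_sol t + cbrt2) / 2).
  apply (continuity_pt_recip_prelim hitting_time u_sol lb ub); unfold lb, ub in *.
  - lra.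
  - intros x y Hx Hxy Hy; apply hitting_time_lt; lra.
  - intros x Hx; unfold comp, id; apply u_sol_hitting_time; lra.
  - intros x Hx; apply continuous_hitting_time; lra.
  - split; [apply lt_u_sol_iff | apply u_sol_lt_iff]; lra.
Qed.

Lemma is_derive_u_sol t : tmin < t ->
  is_derive u_sol t (/ (3/2 * tmin_integrand (u_sol t))).
Proof.
  intros Ht.
  set (lb := (tmin + t) / 2); set (ub := t + 1).
  destruct (u_sol_spec t Ht) as [Hu _].
  destruct (u_sol_spec ub ltac:(unfold ub; lra)) as [Hub Eub].
  destruct (u_sol_spec lb ltac:(unfold lb; lra)) as [Hlb Elb].
  assert (Hmono : u_sol lb <= u_sol t <= u_sol ub).
  { split; left; [apply lt_u_sol_iff | apply u_sol_lt_iff]; unfold lb, ub in *; lra. }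
  assert (Hder : forall w, u_sol lb <= w <= u_sol ub -> derivable_pt hitting_time w).
  { intros w Hw; exists (3/2 * tmin_integrand w).
    apply is_derive_Reals, is_derive_hitting_time; lra. }
  assert (Hinv : forall x, lb <= x <= ub -> comp hitting_time u_sol x = id x).
  { intros x Hx; unfold comp, id; apply u_sol_spec; unfold lb in *; lra. }
  assert (Hk : 0 < tmin_integrand (u_sol t)) by (apply tmin_integrand_pos; lra).
  pose proof (derivable_pt_lim_recip_interv hitting_time u_sol lb ub t Hder
    (continuous_u_sol t Ht) ltac:(unfold lb, ub; lra) ltac:(unfold lb, ub; lra)
    Hmono Hinv) as Hlim.
  rewrite (derive_pt_eq_0 _ _ (3/2 * tmin_integrand (u_sol t))) in Hlim;
    [| apply is_derive_Reals, is_derive_hitting_time; lra].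
  apply is_derive_Reals; rewrite <- Rdiv_1_l; apply Hlim; lra.
Qed.

Definition curve (w : R) : R := 1 / sqrt (w * (2 - w ^ 3)).

Definition curve_deriv (w : R) : R :=
  - (2 - 4 * w ^ 3) / (2 * sqrt (w * (2 - w ^ 3)) * (w * (2 - w ^ 3))).

Lemma curve_arg_pos w : 0 < w < cbrt2 -> 0 < w * (2 - w ^ 3).
Proof. intros Hw; assert (w ^ 3 < 2) by (apply lt_cbrt2; lra); nra. Qed.

Lemma curve_pos w : 0 < w < cbrt2 -> 0 < curve w.
Proof.
  intros Hw; apply Rdiv_lt_0_compat; [lra|].
  now apply sqrt_lt_R0, curve_arg_pos.
Qed.

Lemma is_derive_curve w : 0 < w < cbrt2 -> is_derive curve w (curve_deriv w).
Proof.
  intros Hw; assert (Hq := curve_arg_pos w Hw).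
  assert (0 < sqrt (w * (2 - w ^ 3))) by (apply sqrt_lt_R0; lra).
  assert (Hr : sqrt (w * (2 - w ^ 3)) * sqrt (w * (2 - w ^ 3)) = w * (2 - w ^ 3))
    by (apply sqrt_sqrt; lra).
  unfold curve, curve_deriv; auto_derive;
    replace (2 + - (w * (w * (w * 1)))) with (2 - w ^ 3) by ring.
  - repeat split; lra.
  - set (r := sqrt (w * (2 - w ^ 3))) in *; clearbody r; rewrite <- Hr; field; lra.
Qed.

Lemma F_on_curve w : 0 < w < cbrt2 ->
  F1 w (curve w) = / (3/2 * tmin_integrand w) /\
  F2 w (curve w) = / (3/2 * tmin_integrand w) * curve_deriv w.
Proof.
  intros Hw; assert (Hw3 : w ^ 3 < 2) by (apply lt_cbrt2; lra).
  unfold curve, curve_deriv, tmin_integrand; rewrite sqrt_mult by lra.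
  assert (0 < sqrt w) by (apply sqrt_lt_R0; lra).
  assert (0 < sqrt (2 - w ^ 3)) by (apply sqrt_lt_R0; lra).
  assert (Hs : w = sqrt w * sqrt w) by (rewrite sqrt_sqrt; lra).
  assert (Hr : sqrt (2 - w ^ 3) * sqrt (2 - w ^ 3) = 2 - w ^ 3) by (apply sqrt_sqrt; lra).
  set (s := sqrt w) in *; set (r := sqrt (2 - w ^ 3)) in *; clearbody s r.
  unfold F1, F2; subst w; rewrite <- Hr; split; field; lra.
Qed.

Definition v_sol (t : R) : R := curve (u_sol t).

Lemma is_sol_u_sol : is_sol tmin p_infty u_sol v_sol.
Proof.
  assert (Hu0 : u_sol 0 = 1)
    by (rewrite <- hitting_time_1 at 1; apply u_sol_hitting_time; pose proof cbrt2_gt1; lra).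
  split; [exact tmin_neg|]; split; [exact I|]; split; [exact Hu0|]; split.
  - unfold v_sol, curve; rewrite Hu0; replace (1 * (2 - 1 ^ 3)) with 1 by ring.
    rewrite sqrt_1; lra.
  - intros t [Ht _]; destruct (u_sol_spec t Ht) as [Hu _].
    unfold v_sol; destruct (F_on_curve _ Hu) as [-> ->].
    split; [split; [easy | now apply curve_pos] | split].
    + now apply is_derive_u_sol.
    + apply (is_derive_comp curve u_sol); [now apply is_derive_curve | now apply is_derive_u_sol].
Qed.

Lemma in_I_between a b x y z : in_I a b x -> in_I a b y -> x <= z <= y -> in_I a b z.
Proof.
  intros [Hax _] [_ Hyb] Hz; split.
  - destruct a as [a| |]; simpl in *; lra || easy.
  - destruct b as [b| |]; simpl in *; lra || easy.
Qed.

Lemma is_derive_0_const_on a b (f : R -> R) s t : in_I a b s -> in_I a b t ->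
  (forall x, in_I a b x -> is_derive f x 0) -> f t = f s.
Proof.
  intros Hs Ht Hd.
  destruct (Rtotal_order s t) as [Hlt|[->|Hlt]]; [| easy |].
  - destruct (MVT_interior f (fun _ => 0) s t Hlt) as [z [_ Ez]]; [|lra].
    intros z Hz; apply Hd, (in_I_between a b s t); auto.
  - destruct (MVT_interior f (fun _ => 0) t s Hlt) as [z [_ Ez]]; [|lra].
    intros z Hz; apply Hd, (in_I_between a b t s); auto.
Qed.

Section AnySolution.

Variables (a b : Rbar) (u v : R -> R).
Hypothesis Hsol : is_sol a b u v.

Let in_I_0 : in_I a b 0.
Proof. destruct Hsol as [Ha [Hb _]]; now split. Qed.

Let sol_at t : in_I a b t ->
  (0 < u t < cbrt2 /\ 0 < v t) /\
  is_derive u t (F1 (u t) (v t)) /\ is_derive v t (F2 (u t) (v t)).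
Proof. destruct Hsol as [_ [_ [_ [_ Hs]]]]; apply Hs. Qed.

Lemma sol_first_integral t : in_I a b t -> v t ^ 2 * (u t * (2 - u t ^ 3)) = 1.
Proof.
  intros Ht; destruct Hsol as [_ [_ [Hu0 [Hv0 _]]]].
  rewrite (is_derive_0_const_on a b (fun t => v t ^ 2 * (u t * (2 - u t ^ 3))) 0 t
    in_I_0 Ht), Hu0, Hv0; [ring|].
  intros s Hs; destruct (sol_at s Hs) as [[[Hu _] Hv] [Du Dv]].
  replace 0 with ((F2 (u s) (v s) * (2 * v s)) * (u s * (2 - u s ^ 3))
                  + v s ^ 2 * (F1 (u s) (v s) * (2 - 4 * u s ^ 3)))
    by (unfold F1, F2; field; lra).
  apply (is_derive_mult (fun t => v t ^ 2) (fun t => u t * (2 - u t ^ 3)));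
    [| | intros; apply Rmult_comm].
  - apply (is_derive_comp (fun y => y ^ 2) v); [auto_derive; [easy | ring] | easy].
  - apply (is_derive_comp (fun y => y * (2 - y ^ 3)) u); [auto_derive; [easy | ring] | easy].
Qed.

Lemma sol_on_curve t : in_I a b t -> v t = curve (u t).
Proof.
  intros Ht; destruct (sol_at t Ht) as [[Hu Hv] _].
  assert (Hq : u t * (2 - u t ^ 3) = (1 / v t) ^ 2).
  { apply Rmult_eq_reg_l with (v t ^ 2); [|apply pow_nonzero; lra].
    rewrite (sol_first_integral t Ht); field; lra. }
  unfold curve; rewrite Hq, sqrt_pow2; [field; lra|].
  left; apply Rdiv_lt_0_compat; lra.
Qed.

Lemma sol_hitting_time t : in_I a b t -> hitting_time (u t) = t.
Proof.
  intros Ht; destruct Hsol as [_ [_ [Hu0 _]]].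
  enough (hitting_time (u t) - t = hitting_time (u 0) - 0)
    by (rewrite Hu0, hitting_time_1 in *; lra).
  apply (is_derive_0_const_on a b (fun t => hitting_time (u t) - t)); [exact in_I_0 | easy |].
  intros s Hs; destruct (sol_at s Hs) as [[Hu _] [Du _]].
  rewrite (sol_on_curve s Hs), (proj1 (F_on_curve _ Hu)) in Du.
  assert (0 < tmin_integrand (u s)) by now apply tmin_integrand_pos.
  replace 0 with ((/ (3/2 * tmin_integrand (u s))) * (3/2 * tmin_integrand (u s)) - 1)
    by (field; lra).
  apply (is_derive_minus (fun t => hitting_time (u t)) (fun t => t));
    [apply (is_derive_comp hitting_time u); [apply is_derive_hitting_time; lra | easy] |].
  apply (is_derive_id (K := R_AbsRing)).
Qed.

Lemma sol_eq_u_sol t : in_I a b t -> u t = u_sol t /\ v t = v_sol t.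
Proof.
  intros Ht; destruct (sol_at t Ht) as [[Hu _] _].
  assert (Eu : u t = u_sol t)
    by (rewrite <- (u_sol_hitting_time (u t) Hu), (sol_hitting_time t Ht) at 1; easy).
  split; [easy|]; unfold v_sol; rewrite <- Eu; now apply sol_on_curve.
Qed.

Lemma sol_tmin_le : Rbar_le tmin a.
Proof.
  destruct (Rbar_le_lt_dec tmin a) as [|Hlt]; [easy|]; exfalso.
  assert (Ht : in_I a b tmin).
  { split; [easy|]; destruct Hsol as [_ [Hb _]].
    destruct b as [b'| |]; simpl in *; try easy; pose proof tmin_neg; lra. }
  destruct (sol_at tmin Ht) as [[Hu _] _].
  assert (hitting_time 0 < hitting_time (u tmin)) by (apply hitting_time_lt; lra).
  rewrite hitting_time_0, (sol_hitting_time tmin Ht) in *; lra.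
Qed.

End AnySolution.

Lemma filterlim_at_right_of_locally {T} (F : (T -> Prop) -> Prop) {FF : Filter F}
  (f : T -> R) l :
  filterlim f F (locally l) -> F (fun x => l < f x) -> filterlim f F (at_right l).
Proof.
  intros Hf Hgt P [eps HP]; unfold filtermap.
  apply (filter_imp (fun x => ball l eps (f x) /\ l < f x)).
  - intros x [Hb Hl]; now apply HP.
  - apply filter_and; [apply Hf, locally_ball | exact Hgt].
Qed.

Lemma ball_R_bounds (x e y : R) : ball x e y -> x - e < y < x + e.
Proof. intros Hb; change (Rabs (y - x) < e) in Hb; now apply Rabs_lt_between'. Qed.

Lemma curve_arg_at_right_0 :
  filterlim (fun w => w * (2 - w ^ 3)) (at_right 0) (at_right 0).
Proof.
  apply (filterlim_at_right_of_locally _).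
  - replace 0 with (0 * (2 - 0 ^ 3)) at 2 by ring.
    apply (filterlim_filter_le_1 _ (filter_le_within (F := locally _) _)).
    apply (continuity_pt_filterlim (fun w => w * (2 - w ^ 3))); reg.
  - exists (mkposreal cbrt2 cbrt2_pos); intros w Hw Hw0; apply curve_arg_pos.
    apply ball_R_bounds in Hw; simpl in Hw; lra.
Qed.

Lemma curve_arg_at_left_cbrt2 :
  filterlim (fun w => w * (2 - w ^ 3)) (at_left cbrt2) (at_right 0).
Proof.
  apply (filterlim_at_right_of_locally _).
  - replace 0 with (cbrt2 * (2 - cbrt2 ^ 3)).
    + apply (filterlim_filter_le_1 _ (filter_le_within (F := locally _) _)).
      apply (continuity_pt_filterlim (fun w => w * (2 - w ^ 3))); reg.
    + unfold cbrt2; rewrite Rpower_third_pow3 by lra; ring.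
  - exists (mkposreal cbrt2 cbrt2_pos); intros w Hw Hwc; apply curve_arg_pos.
    apply ball_R_bounds in Hw; simpl in Hw; lra.
Qed.

Lemma curve_p_infty (F : (R -> Prop) -> Prop) {FF : Filter F} :
  filterlim (fun w => w * (2 - w ^ 3)) F (at_right 0) ->
  filterlim curve F (Rbar_locally p_infty).
Proof.
  intros Hq.
  apply (filterlim_ext (fun w => sqrt (/ (w * (2 - w ^ 3))))).
  - intros w; unfold curve, Rdiv; rewrite sqrt_inv; ring.
  - eapply filterlim_comp; [eapply filterlim_comp; [exact Hq | exact filterlim_Rinv_0_right]|].
    exact filterlim_sqrt_p.
Qed.

Lemma u_sol_at_right_tmin : filterlim u_sol (at_right tmin) (at_right 0).
Proof.
  intros P [eps HP].
  set (w := Rmin eps (cbrt2 / 2)).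
  assert (Hw : 0 < w < cbrt2 /\ w <= eps).
  { pose proof cbrt2_pos; pose proof (cond_pos eps); unfold w.
    split; [split; [apply Rmin_glb_lt|]|apply Rmin_l]; try lra.
    pose proof (Rmin_r eps (cbrt2 / 2)); lra. }
  assert (Hd : 0 < hitting_time w - tmin)
    by (rewrite <- hitting_time_0; pose proof (hitting_time_lt 0 w); lra).
  exists (mkposreal _ Hd); intros t Ht Htmin; apply ball_R_bounds in Ht; simpl in Ht.
  destruct (u_sol_spec t Htmin) as [Hu _].
  assert (u_sol t < w) by (apply u_sol_lt_iff; lra).
  apply HP; [apply Rabs_lt_between'; lra | easy].
Qed.

Lemma u_sol_p_infty : filterlim u_sol (Rbar_locally p_infty) (at_left cbrt2).
Proof.
  intros P [eps HP].
  set (w := cbrt2 - Rmin eps (cbrt2 / 2)).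
  assert (Hw : 0 < w < cbrt2 /\ cbrt2 - eps <= w).
  { pose proof cbrt2_pos; pose proof (cond_pos eps); unfold w.
    pose proof (Rmin_l eps (cbrt2 / 2)); pose proof (Rmin_r eps (cbrt2 / 2)).
    assert (0 < Rmin eps (cbrt2 / 2)) by (apply Rmin_glb_lt; lra); lra. }
  exists (hitting_time w); intros t Ht.
  assert (Htmin : tmin < t)
    by (rewrite <- hitting_time_0 in *; pose proof (hitting_time_lt 0 w); lra).
  destruct (u_sol_spec t Htmin) as [Hu _].
  assert (w < u_sol t) by (apply lt_u_sol_iff; lra).
  apply HP; [apply Rabs_lt_between'; lra | easy].
Qed.

Lemma v_sol_at_right_tmin : filterlim v_sol (at_right tmin) (Rbar_locally p_infty).
Proof.
  apply (filterlim_comp _ _ _ u_sol curve _ (at_right 0)); [exact u_sol_at_right_tmin|].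
  exact (curve_p_infty _ curve_arg_at_right_0).
Qed.

Lemma v_sol_p_infty : filterlim v_sol (Rbar_locally p_infty) (Rbar_locally p_infty).
Proof.
  apply (filterlim_comp _ _ _ u_sol curve _ (at_left cbrt2)); [exact u_sol_p_infty|].
  exact (curve_p_infty _ curve_arg_at_left_cbrt2).
Qed.

Theorem corollary4p6 :
  (exists u v : R -> R, is_max_sol (Finite tmin) p_infty u v) /\
  (forall (a b : Rbar) (u v : R -> R), is_max_sol a b u v ->
     a = Finite tmin /\ b = p_infty /\
     (forall t, in_I a b t -> v t = 1 / sqrt (u t * (2 - u t ^ 3))) /\
     (forall w, 0 < w < cbrt2 -> exists t, in_I a b t /\ u t = w) /\
     filterlim u (at_right tmin) (locally 0) /\
     filterlim v (at_right tmin) (Rbar_locally p_infty) /\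
     is_lim u p_infty cbrt2 /\
     is_lim v p_infty p_infty).
Proof.
  split.
  - exists u_sol, v_sol; split; [exact is_sol_u_sol|].
    intros a' b' u' v' Hsol Ha' Hb' _; split.
    + apply Rbar_le_antisym; [easy | exact (sol_tmin_le _ _ _ _ Hsol)].
    + now destruct b'.
  - intros a b u v [Hsol Hmax].
    destruct (Hmax tmin p_infty u_sol v_sol is_sol_u_sol (sol_tmin_le _ _ _ _ Hsol))
      as [<- <-]; [now destruct b | intros t Ht; split; symmetry; now apply (sol_eq_u_sol a b u v)|].
    assert (Eu : forall t, tmin < t -> u_sol t = u t)
      by (intros t Ht; symmetry; now apply (sol_eq_u_sol tmin p_infty u v)).
    assert (Ev : forall t, tmin < t -> v_sol t = v t)
      by (intros t Ht; symmetry; now apply (sol_eq_u_sol tmin p_infty u v)).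
    do 2 (split; [easy|]); split; [exact (sol_on_curve _ _ _ _ Hsol)|]; split.
    { intros w Hw.
      assert (Ht : tmin < hitting_time w)
        by (rewrite <- hitting_time_0; apply hitting_time_lt; lra).
      exists (hitting_time w); split; [easy|].
      rewrite <- (Eu _ Ht); now apply u_sol_hitting_time. }
    split; [|split; [|split]].
    + apply (filterlim_ext_loc u_sol); [exists (mkposreal 1 Rlt_0_1); auto|].
      exact (filterlim_filter_le_2 _ (filter_le_within (F := locally _) _) u_sol_at_right_tmin).
    + apply (filterlim_ext_loc v_sol); [exists (mkposreal 1 Rlt_0_1); auto|].
      exact v_sol_at_right_tmin.
    + apply (filterlim_ext_loc u_sol); [exists tmin; exact Eu|].
      exact (filterlim_filter_le_2 _ (filter_le_within (F := locally _) _) u_sol_p_infty).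
    + apply (filterlim_ext_loc v_sol); [exists tmin; exact Ev|].
      exact v_sol_p_infty.
Qed.
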